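(* Let $(\mathcal G,\lambda)$ be a small morphism-colored groupoid satisfying the inverse-compatibility condition. For $f,g\in\mathrm{Mor}(\mathcal G)$ with $(s_0\circ\lambda_0)(\mathrm{source}(f))=(s_0\circ\lambda_0)(\mathrm{target}(g))$, there exists a composable pair $(f',g')$ of morphisms of $\mathcal G$ (i.e. $\mathrm{source}(f')=\mathrm{target}(g')$) such that $(s_1\circ\lambda_1)(f)=(s_1\circ\lambda_1)(f')$ and $(s_1\circ\lambda_1)(g)=(s_1\circ\lambda_1)(g')$.
   Context: A morphism-colored category is a pair $(\mathcal C,\lambda)$ where $\mathcal C$ is a category and $\lambda$ assigns to each morphism $f$ a color $\lambda(f)$, such that: whenever $g,f_1,f_2$ with $(f_1,f_2)$ composable satisfy $\lambda(g)=\lambda(f_1\circ f_2)$, there exist composable $g_1,g_2$ with $g=g_1\circ g_2$, $\lambda(g_1)=\lambda(f_1)$, $\lambda(g_2)=\lambda(f_2)$. It is a morphism-colored groupoid if $\mathcal C$ is a groupoid, and small if $\mathcal C$ is small and $\lambda$ is a map into a set. Inverse-compatibility: $\lambda(f)=\lambda(g)$ implies $\lambda(f^{-1})=\lambda(g^{-1})$. $I_1=\lambda(\mathrm{Mor}(\mathcal G))$, $\lambda_1$ the corestriction of $\lambda$ to $I_1$; $I_0=\{\lambda(\mathrm{id}_x):x\in\mathrm{Obj}(\mathcal G)\}$, $\lambda_0(x)=\lambda(\mathrm{id}_x)$. The equivalence relation $\overset{1}{\sim}$ on $I_1$: $\lambda(f_1\circ\cdots\circ f_l)\overset{1}{\sim}\lambda(g_1\circ\cdots\circ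 g_l)$ for every $l\ge1$ and all composable sequences with $\lambda(f_i)=\lambda(g_i)$ for all $i$ (no other pairs); $s_1:I_1\to\bar I_1$ the quotient map. The equivalence relation $\overset{0}{\sim}$ on $I_0$: $\lambda_0(\mathrm{source}(f))\overset{0}{\sim}\lambda_0(\mathrm{source}(g))$ whenever $(s_1\circ\lambda_1)(f)=(s_1\circ\lambda_1)(g)$; $s_0:I_0\to\bar I_0$ the quotient map onto its classes. *)

From Stdlib Require Import List Relations.
Import ListNotations.

(* A small groupoid: object and morphism types, source/target, identities,
   composition (total function, meaningful only on composable pairs
   (f, g) with src f = tgt g, giving f o g), inverses. *)
Record Groupoid := {
  Obj : Type;
  Mor : Type;
  src : Mor -> Obj;
  tgt : Mor -> Obj;
  idm : Obj -> Mor;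
  comp : Mor -> Mor -> Mor;
  inv : Mor -> Mor;
  src_idm : forall x, src (idm x) = x;
  tgt_idm : forall x, tgt (idm x) = x;
  src_comp : forall f g, src f = tgt g -> src (comp f g) = src g;
  tgt_comp : forall f g, src f = tgt g -> tgt (comp f g) = tgt f;
  comp_idr : forall f, comp f (idm (src f)) = f;
  comp_idl : forall f, comp (idm (tgt f)) f = f;
  comp_assoc : forall f g h, src f = tgt g -> src g = tgt h ->
      comp f (comp g h) = comp (comp f g) h;
  src_inv : forall f, src (inv f) = tgt f;
  tgt_inv : forall f, tgt (inv f) = src f;
  comp_inv_r : forall f, comp f (inv f) = idm (tgt f);
  comp_inv_l : forall f, comp (inv f) f = idm (src f)
}.

Arguments src {G0} _ : rename.
Arguments tgt {G0} _ : rename.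
Arguments idm {G0} _ : rename.
Arguments comp {G0} _ _ : rename.
Arguments inv {G0} _ : rename.

Section Colored.
Variable G : Groupoid.
Variable I : Type.
Variable lam : Mor G -> I.

Definition morphism_colored : Prop :=
  forall g f1 f2 : Mor G, src f1 = tgt f2 -> lam g = lam (comp f1 f2) ->
    exists g1 g2, src g1 = tgt g2 /\ g = comp g1 g2 /\
                  lam g1 = lam f1 /\ lam g2 = lam f2.

Definition inverse_compatible : Prop :=
  forall f g : Mor G, lam f = lam g -> lam (inv f) = lam (inv g).

(* A nonempty sequence f :: fs = (f_1, ..., f_l), composable,
   and its composite f_1 o ... o f_l. *)
Fixpoint composable (f : Mor G) (fs : list (Mor G)) : Prop :=
  match fs with
  | [] => True
  | h :: t => src f = tgt h /\ composable h t
  end.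

Fixpoint compose_seq (f : Mor G) (fs : list (Mor G)) : Mor G :=
  match fs with
  | [] => f
  | h :: t => comp f (compose_seq h t)
  end.

Definition rel1 (a b : I) : Prop :=
  exists f fs g gs,
    composable f fs /\ composable g gs /\
    Forall2 (fun x y => lam x = lam y) (f :: fs) (g :: gs) /\
    a = lam (compose_seq f fs) /\ b = lam (compose_seq g gs).

(* Equality after the quotient map s1 (classes of the equivalence relation
   ~1; we take the generated equivalence, which coincides with ~1 since the
   paper asserts ~1 is an equivalence relation). *)
Definition s1_eq (a b : I) : Prop := clos_refl_sym_trans I rel1 a b.

(* Generating pairs of ~0 on I0 = colors of identities. *)
Definition rel0 (a b : I) : Prop :=
  exists f g : Mor G, s1_eq (lam f) (lam g) /\
    a = lam (idm (src f)) /\ b = lam (idm (src g)).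

Definition s0_eq (a b : I) : Prop := clos_refl_sym_trans I rel0 a b.

End Colored.

(* The set of colors of morphisms composable before a morphism [p] depends
   only on the color of [p]: if [lam p = lam q] and [h] precedes [q], split [p]
   along the factorisation [q = (q o h) o h^-1]; the inverse of the second factor
   has the color of [h] (inverse compatibility) and ends at [src p].  This
   invariant passes to composites (whose source is the source of their last
   factor), hence to the classes of ~1, then to identities of objects, hence to
   the classes of ~0.  Applied to [g] preceding [id (tgt g)] it yields [g']. *)

From Stdlib Require Import List Relations.
Import ListNotations.

Lemma last_cons {A} (x : A) l d : last (x :: l) d = last l x.
Proof.
  revert x d; induction l as [|y l IH]; intros x d; [reflexivity|].
  change (last (y :: l) d = last (y :: l) x); now rewrite !IH.
Qed.

Section Groupoid_facts.
Variable G : Groupoid.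

Lemma inv_inv (h : Mor G) : inv (inv h) = h.
Proof.
  rewrite <- (comp_idr _ (inv (inv h))), src_inv, tgt_inv, <- (comp_inv_l _ h).
  rewrite comp_assoc by now rewrite ?src_inv, ?tgt_inv.
  now rewrite comp_inv_l, src_inv, comp_idl.
Qed.

Lemma comp_compK (q h : Mor G) : src q = tgt h -> comp (comp q h) (inv h) = q.
Proof.
  intro Hqh.
  rewrite <- comp_assoc by now rewrite ?tgt_inv.
  now rewrite comp_inv_r, <- Hqh, comp_idr.
Qed.

Lemma tgt_compose_seq (f : Mor G) fs :
  composable G f fs -> tgt (compose_seq G f fs) = tgt f.
Proof.
  revert f; induction fs as [|f2 fs IH]; intros f Hc; [reflexivity|].
  destruct Hc as [Hf Hc]; apply tgt_comp; now rewrite IH.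
Qed.

Lemma src_compose_seq (f : Mor G) fs :
  composable G f fs -> src (compose_seq G f fs) = src (last fs f).
Proof.
  revert f; induction fs as [|f2 fs IH]; intros f Hc; [reflexivity|].
  destruct Hc as [Hf Hc]; cbn [compose_seq].
  rewrite src_comp by now rewrite tgt_compose_seq.
  now rewrite IH, last_cons.
Qed.

End Groupoid_facts.

Lemma Forall2_last {A B} (R : A -> B -> Prop) x xs y ys :
  Forall2 R (x :: xs) (y :: ys) -> R (last xs x) (last ys y).
Proof.
  revert x y ys; induction xs as [|x2 xs IH]; intros x y ys HR;
    inversion HR as [|? ? ? ? ? Hrest]; subst.
  - now inversion Hrest.
  - destruct ys as [|y2 ys]; [now inversion Hrest|].
    rewrite !last_cons; exact (IH x2 y2 ys Hrest).
Qed.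

Lemma clos_rst_iff_invariant {A} (R : relation A) (P : A -> A -> Prop) :
  (forall a b, R a b -> forall c, P a c <-> P b c) ->
  forall a b, clos_refl_sym_trans A R a b -> forall c, P a c <-> P b c.
Proof.
  intros HR a b Hab; induction Hab as [| | | ? ? ? ? IH1 ? IH2]; intro c.
  - now apply HR.
  - reflexivity.
  - now symmetry.
  - now rewrite IH1.
Qed.

Section Colored_groupoid.
Variable G : Groupoid.
Variable I : Type.
Variable lam : Mor G -> I.
Hypothesis Hcol : morphism_colored G I lam.
Hypothesis Hinv : inverse_compatible G I lam.

Definition composable_colors (a c : I) : Prop :=
  exists p h : Mor G, src p = tgt h /\ lam p = a /\ lam h = c.

Lemma composable_colorsP (p : Mor G) c :
  composable_colors (lam p) c <-> exists h, tgt h = src p /\ lam h = c.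
Proof.
  split; [|intros (h & Hh & Hc); now exists p, h].
  intros (q & h & Hqh & Hq & <-).
  destruct (Hcol p (comp q h) (inv h)) as (a & b & Hab & -> & _ & Hb).
  - now rewrite src_comp, tgt_inv.
  - now rewrite comp_compK.
  - exists (inv b); split.
    + now rewrite tgt_inv, src_comp.
    + now rewrite (Hinv _ _ Hb), inv_inv.
Qed.

Lemma composable_colors_idm (x : Obj G) c :
  composable_colors (lam (idm x)) c <-> exists h, tgt h = x /\ lam h = c.
Proof. now rewrite composable_colorsP, src_idm. Qed.

Lemma composable_colors_compose_seq f fs c :
  composable G f fs ->
  composable_colors (lam (compose_seq G f fs)) c <->
  composable_colors (lam (last fs f)) c.
Proof. intro Hc; now rewrite !composable_colorsP, src_compose_seq. Qed.

Lemma composable_colors_rel1 a b :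
  rel1 G I lam a b -> forall c, composable_colors a c <-> composable_colors b c.
Proof.
  intros (f & fs & g & gs & Hf & Hg & Hfg & -> & ->) c.
  rewrite (composable_colors_compose_seq _ _ _ Hf),
          (composable_colors_compose_seq _ _ _ Hg).
  now rewrite (Forall2_last _ _ _ _ _ Hfg).
Qed.

Lemma composable_colors_s1 a b :
  s1_eq G I lam a b -> forall c, composable_colors a c <-> composable_colors b c.
Proof. apply clos_rst_iff_invariant, composable_colors_rel1. Qed.

Lemma composable_colors_rel0 a b :
  rel0 G I lam a b -> forall c, composable_colors a c <-> composable_colors b c.
Proof.
  intros (f & g & Hfg & -> & ->) c.
  rewrite !composable_colors_idm, <- !composable_colorsP.
  now apply composable_colors_s1.
Qed.

Lemma composable_colors_s0 a b :
  s0_eq G I lam a b -> forall c, composable_colors a c <-> composable_colors b c.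
Proof. apply clos_rst_iff_invariant, composable_colors_rel0. Qed.

End Colored_groupoid.

Theorem proposition3p10 (G : Groupoid) (I : Type) (lam : Mor G -> I)
  (Hcol : morphism_colored G I lam) (Hinv : inverse_compatible G I lam)
  (f g : Mor G)
  (Hfg : s0_eq G I lam (lam (idm (src f))) (lam (idm (tgt g)))) :
  exists f' g' : Mor G, src f' = tgt g' /\
    s1_eq G I lam (lam f) (lam f') /\ s1_eq G I lam (lam g) (lam g').
Proof.
  pose proof (composable_colors_idm G I lam Hcol Hinv) as Hidm.
  destruct (proj1 (Hidm (src f) (lam g))) as (g' & Hg' & Hlam).
  { apply (composable_colors_s0 G I lam Hcol Hinv _ _ Hfg), Hidm.
    now exists g. }
  exists f, g'; repeat split.
  - now symmetry.
  - apply rst_refl.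
  - rewrite Hlam; apply rst_refl.
Qed.
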